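(* Let $\Gamma\subset\mathbb{Z}^2$ be a finite convex domain. Let $\mathcal{H}_G^\Gamma=\{H\in\mathcal{H}_\mathbb{Q}^\Gamma : (\Delta_\Gamma H)|_{\partial\Gamma}\in\mathbb{Z}^{\partial\Gamma}\}/\mathcal{H}_\mathbb{Z}^\Gamma$. Then the map $H\mapsto[-\Delta_\Gamma H]$ is a well-defined group isomorphism $\mathcal{H}_G^\Gamma\cong G_\Gamma$. Equivalently, the sequence $$0\to G_\Gamma\to \mathcal{H}_\mathbb{Q}^\Gamma/\mathcal{H}_\mathbb{Z}^\Gamma\to(\mathbb{Q}/\mathbb{Z})^{\partial\Gamma}\to 0,$$ where the first map is the inverse of this isomorphism followed by the inclusion, and the second map sends $H$ to $(\Delta_\Gamma H)|_{\partial\Gamma}$ modulo $\mathbb{Z}^{\partial\Gamma}$, is exact.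
   Context: A set $\Gamma\subseteq\mathbb{Z}^2$ is a convex domain if $\Gamma=P\cap\mathbb{Z}^2$ for some convex open set $P\subseteq\mathbb{R}^2$. For finite $\Gamma$, consider the graph with vertices $\Gamma\cup\{s\}$ obtained from the nearest-neighbor graph $\mathbb{Z}^2$ by identifying all vertices outside $\Gamma$ to a sink $s$. The reduced Laplacian is $(\Delta_\Gamma f)(v)=\sum_{w\in\Gamma,\,w\sim v}f(w)-4f(v)$ for $f:\Gamma\to R$, $v\in\Gamma$. The sandpile group is $G_\Gamma=\mathbb{Z}^\Gamma/\Delta_\Gamma(\mathbb{Z}^\Gamma)$, with $[\cdot]$ the projection. The boundary $\partial\Gamma$ is the set of vertices of $\Gamma$ adjacent (in $\mathbb{Z}^2$) to some vertex outside $\Gamma$, and $\Gamma\setminus\partial\Gamma$ is the interior. For $R\in\{\mathbb{Z},\mathbb{Q},\mathbb{R}\}$, $\mathcal{H}_R^\Gamma$ is the module of functions $H:\Gamma\to R$ that are harmonic on $\Gamma$, i.e. $(\Delta_\Gamma H)(v)=0$ for all $v\in\Gamma\setminus\partial\Gamma$. *)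

From HB Require Import structures.
From mathcomp Require Import all_boot all_order all_algebra.
From mathcomp Require Import finmap.
From Stdlib Require Import Reals.
Set Implicit Arguments. Unset Strict Implicit. Unset Printing Implicit Defensive.
Import Order.TTheory GRing.Theory Num.Theory.

Definition pt := (int * int)%type.

Definition int2R (z : int) : R :=
  match z with Posz n => INR n | Negz n => (- INR (S n))%R end.

Definition convex2 (P : R -> R -> Prop) : Prop :=
  forall x1 y1 x2 y2 t, P x1 y1 -> P x2 y2 -> (0 <= t <= 1)%R ->
    P (t * x1 + (1 - t) * x2)%R (t * y1 + (1 - t) * y2)%R.
Definition open2 (P : R -> R -> Prop) : Prop :=
  forall x y, P x y -> exists e : R, (0 < e)%R /\
    forall x' y', ((x' - x) ^ 2 + (y' - y) ^ 2 < e ^ 2)%R -> P x' y'.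

Definition convex_domain (G : {fset pt}) : Prop :=
  exists P : R -> R -> Prop, convex2 P /\ open2 P /\
    forall z : pt, z \in G <-> P (int2R z.1) (int2R z.2).

Local Open Scope ring_scope.

Definition nbrs (v : pt) : seq pt :=
  [:: (v.1 + 1, v.2); (v.1 - 1, v.2); (v.1, v.2 + 1); (v.1, v.2 - 1)].

(* reduced Laplacian: (Δ_Γ f)(v) = Σ_{w ∈ Γ, w ~ v} f(w) - 4 f(v).
   Functions Γ -> K are represented by functions pt -> K (values off Γ are
   irrelevant). *)
Definition lap (K : pzRingType) (G : {fset pt}) (f : pt -> K) (v : pt) : K :=
  \sum_(w <- nbrs v | w \in G) f w - 4%:R * f v.

Definition boundary (G : {fset pt}) (v : pt) : bool :=
  (v \in G) && has (fun w => w \notin G) (nbrs v).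
Definition interior (G : {fset pt}) (v : pt) : bool :=
  (v \in G) && ~~ boundary G v.

Definition harmonic (K : pzRingType) (G : {fset pt}) (H : pt -> K) : Prop :=
  forall v, interior G v -> lap G H v = 0.

Definition is_intQ (x : rat) : Prop := exists z : int, x = z%:~R.

(* H ∈ H_Z^Γ, viewed inside H_Q^Γ: rational harmonic and integer-valued on Γ *)
Definition int_valued (G : {fset pt}) (H : pt -> rat) : Prop :=
  forall v, v \in G -> is_intQ (H v).

(* the group {H ∈ H_Q^Γ : (Δ_Γ H)|_{∂Γ} ∈ Z^{∂Γ}} (before quotienting by H_Z) *)
Definition HG_pre (G : {fset pt}) (H : pt -> rat) : Prop :=
  harmonic G H /\ forall v, boundary G v -> is_intQ (lap G H v).

(* equality in the sandpile group G_Γ = Z^Γ / Δ_Γ(Z^Γ) *)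
Definition sand_eq (G : {fset pt}) (f g : pt -> int) : Prop :=
  exists h : pt -> int, forall v, v \in G -> f v - g v = lap G h v.

Definition represents (G : {fset pt}) (f : pt -> int) (H : pt -> rat) : Prop :=
  forall v, v \in G -> (f v)%:~R = - lap G H v.

(* Discrete maximum principle: if Δ_Γ F >= 0 on Γ then F <= 0 on Γ, because at
   the rightmost point where a positive maximum of F is attained, the right
   neighbour contributes strictly less than the maximum.  Hence Δ_Γ is
   injective, thus invertible over Q.  If -Δ_Γ H_i = f_i and f_1 - f_2 = Δ_Γ h,
   then H_1 - H_2 + h has zero Laplacian on Γ, so it vanishes and H_1 - H_2 is
   integral; conversely, if H_1 - H_2 is integral then h := H_2 - H_1 works.
   For surjectivity, sweep the interior of Γ column by column from left to
   right: adding Δ_Γ h with h(a+1, y) = -g(a, y) (and h = 0 elsewhere) empties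
   the interior of column a without touching the columns to its left.  The
   resulting configuration g' is equivalent to g and vanishes on the interior,
   so H := -Δ_Γ^{-1} g' is harmonic with integral boundary Laplacian. *)

From HB Require Import structures.
From mathcomp Require Import all_boot all_order all_algebra.
From mathcomp Require Import finmap.
From mathcomp Require Import lra zify.
Set Implicit Arguments. Unset Strict Implicit. Unset Printing Implicit Defensive.
Import Order.TTheory GRing.Theory Num.Theory.
Local Open Scope ring_scope.

Section LaplacianAlgebra.
Variables (K : pzRingType) (G : {fset pt}).

Lemma lapE (f : pt -> K) (v : pt) :
  let f0 w := if w \in G then f w else 0 in
  lap G f v = f0 (v.1 + 1, v.2) + f0 (v.1 - 1, v.2) + f0 (v.1, v.2 + 1)
              + f0 (v.1, v.2 - 1) - 4%:R * f v.
Proof. by rewrite /lap big_mkcond /= !big_cons big_nil addr0 !addrA. Qed.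

Lemma eq_lap (f1 f2 : pt -> K) v :
  {in G, f1 =1 f2} -> v \in G -> lap G f1 v = lap G f2 v.
Proof.
move=> f12 vG; rewrite /lap (f12 v vG); congr (_ - _).
by apply: eq_bigr => w /f12.
Qed.

Lemma lap0 v : lap G (fun=> 0 : K) v = 0.
Proof. by rewrite /lap big1 // mulr0 subrr. Qed.

Lemma lapD (f1 f2 : pt -> K) v :
  lap G (fun w => f1 w + f2 w) v = lap G f1 v + lap G f2 v.
Proof. by rewrite /lap big_split /= mulrDr opprD addrACA. Qed.

Lemma lapN (f : pt -> K) v : lap G (fun w => - f w) v = - lap G f v.
Proof. by rewrite /lap sumrN mulrN opprD. Qed.

Lemma lapB (f1 f2 : pt -> K) v :
  lap G (fun w => f1 w - f2 w) v = lap G f1 v - lap G f2 v.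
Proof. by rewrite lapD lapN. Qed.

Lemma lap_sum (I : finType) (F : I -> pt -> K) v :
  lap G (fun w => \sum_i F i w) v = \sum_i lap G (F i) v.
Proof. by rewrite /lap exchange_big /= sumrB mulr_sumr. Qed.

End LaplacianAlgebra.

Lemma lap_intr (K : pzRingType) (G : {fset pt}) (h : pt -> int) v :
  lap G (fun w => (h w)%:~R : K) v = (lap G h v)%:~R.
Proof. by rewrite /lap rmorphB /= rmorph_sum rmorphM /= rmorph_nat. Qed.

Lemma lap_ge0_le0 (R : realDomainType) (G : {fset pt}) (F : pt -> R) :
  {in G, forall v, 0 <= lap G F v} -> {in G, forall v, F v <= 0}.
Proof.
move=> subh v vG; rewrite leNgt; apply/negP => Fv_gt0.
have [i0 _ i0_max] := @arg_maxP _ _ G [` vG]%fset predT (fun i => F (val i)) isT.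
set M := F (val i0) in i0_max.
have M_gt0 : 0 < M := lt_le_trans Fv_gt0 (i0_max [` vG]%fset isT).
have [i /eqP Fi i_right] := @arg_maxP _ _ G i0 (fun i => F (val i) == M)
  (fun i => (val i).1) (eqxx _).
set m := val i in Fi i_right.
have F_le_M w : (if w \in G then F w else 0) <= M.
  by case: ifP => [wG|_]; [exact: (i0_max [` wG]%fset) | exact: ltW].
have F_right_lt_M : (if (m.1 + 1, m.2) \in G then F (m.1 + 1, m.2) else 0) < M.
  case: ifP => [wG|//]; have := F_le_M (m.1 + 1, m.2).
  rewrite wG lt_neqAle => ->; rewrite andbT.
  by apply/negP => FwM; have /= := i_right [` wG]%fset FwM; lia.
have := subh m (fsvalP i); rewrite lapE /= Fi.
move: F_right_lt_M (F_le_M (m.1 - 1, m.2)) (F_le_M (m.1, m.2 + 1))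
  (F_le_M (m.1, m.2 - 1)).
set a := (if _ \in G then _ else _); set b := (if _ \in G then _ else _).
set c := (if _ \in G then _ else _); set d := (if _ \in G then _ else _).
lra.
Qed.

Lemma lap_eq0_eq0 (R : realDomainType) (G : {fset pt}) (F : pt -> R) :
  {in G, forall v, lap G F v = 0} -> {in G, forall v, F v = 0}.
Proof.
move=> harm v vG; apply/le_anti/andP; split.
  by apply: (lap_ge0_le0 _ vG) => w wG; rewrite harm.
rewrite -oppr_le0; apply: (@lap_ge0_le0 _ G (fun w => - F w) _ _ vG) => w wG.
by rewrite lapN harm ?oppr0.
Qed.

Section DirichletProblem.
Variables (R : realFieldType) (G : {fset pt}).

Let n := #|{: G}|.
Let node (i : 'I_n) : pt := val (enum_val i).
Let of_row (x : 'rV[R]_n) (w : pt) : R := \sum_i x 0 i * (w == node i)%:R.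
Let lap_mx : 'M[R]_n := \matrix_(i, j) lap G (fun w => (w == node i)%:R) (node j).

Let node_inj : injective node.
Proof. by move=> i j /val_inj/enum_val_inj. Qed.

Let node_rank (v : pt) (vG : v \in G) : node (enum_rank [` vG]%fset) = v.
Proof. by rewrite /node enum_rankK. Qed.

Let of_row_node x k : of_row x (node k) = x 0 k.
Proof.
rewrite /of_row (bigD1 k) //= eqxx mulr1 big1 ?addr0 // => i ik.
by rewrite (inj_eq node_inj) eq_sym (negbTE ik) mulr0.
Qed.

Let mul_lap_mx x j : (x *m lap_mx) 0 j = lap G (of_row x) (node j).
Proof.
rewrite mxE /of_row lap_sum; apply: eq_bigr => i _.
by rewrite mxE /lap mulrBr mulr_sumr mulrCA.
Qed.

Let lap_mx_unit : lap_mx \in unitmx.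
Proof.
rewrite unitmxE unitfE; apply/det0P => -[x /eqP x_neq0 x_ker]; apply: x_neq0.
apply/rowP => k; rewrite mxE -of_row_node.
apply: (@lap_eq0_eq0 _ G) => [v vG|]; last exact: fsvalP.
by rewrite -(node_rank vG) -mul_lap_mx x_ker mxE.
Qed.

Lemma dirichlet_solvable (t : pt -> R) :
  exists H : pt -> R, {in G, forall v, lap G H v = t v}.
Proof.
exists (of_row ((\row_j t (node j)) *m invmx lap_mx)) => v vG.
by rewrite -(node_rank vG) -mul_lap_mx mulmxKV // mxE.
Qed.

End DirichletProblem.

Section Toppling.
Variable G : {fset pt}.

Lemma interior_nbrs v w : interior G v -> w \in nbrs v -> w \in G.
Proof.
rewrite /interior /boundary => /andP[vG]; rewrite vG andTb => /hasPn no_out wv.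
by have := no_out w wv; rewrite negbK.
Qed.

Lemma topple_column (g : pt -> int) (a : int) : exists h : pt -> int,
  (forall v, v.1 < a -> lap G h v = 0) /\
  (forall v, interior G v -> v.1 = a -> g v + lap G h v = 0).
Proof.
pose h w := if w.1 == a + 1 then - g (a, w.2) else 0.
have h0 w : w.1 <= a -> h w = 0 by case: w => x y; rewrite /h /=; case: eqP => // ->; lia.
exists h; split=> [[x y] /= xa|[x y] vi /= xa].
  by rewrite lapE /= !h0 /= ?if_same; lia.
have right_in : (x + 1, y) \in G by apply: interior_nbrs vi _; rewrite !inE eqxx.
have h_right : h (x + 1, y) = - g (x, y) by rewrite /h /= xa eqxx.
by rewrite lapE /= right_in h_right !h0 /= ?if_same; lia.
Qed.

Lemma sweep_columns (n : nat) (g : pt -> int) (a : int) :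
  {in G, forall v, v.1 < a + n%:Z} ->
  (forall v, interior G v -> v.1 < a -> g v = 0) ->
  exists h : pt -> int, forall v, interior G v -> g v + lap G h v = 0.
Proof.
elim: n g a => [|n IHn] g a G_left g_left.
  exists (fun=> 0) => v vi; rewrite lap0 addr0 g_left //.
  by move: vi => /andP[/G_left]; rewrite addr0.
have [h1 [h1_left h1_col]] := topple_column g a.
pose g1 v := g v + lap G h1 v.
have [|v vi va|h2 h2_clears] := IHn g1 (a + 1).
- by move=> v /G_left; lia.
- have [lt_va|eq_va] : v.1 < a \/ v.1 = a by lia.
    by rewrite /g1 g_left // h1_left.
  exact: h1_col.
exists (fun w => h1 w + h2 w) => v vi.
by rewrite lapD addrA h2_clears.
Qed.

Lemma clear_interior (g : pt -> int) :
  exists h : pt -> int, forall v, interior G v -> g v + lap G h v = 0.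
Proof.
have [B G_bounded] : exists B, forall v, v \in G -> (`|v.1| < B)%N.
  exists (\max_(i : G) `|(val i).1|).+1 => v vG.
  by rewrite ltnS (leq_bigmax [` vG]%fset).
by apply: (@sweep_columns (B + B) g (- B%:Z)) => [[x y]|[x y] /andP[]] /G_bounded /=; lia.
Qed.

End Toppling.

Section HarmonicModel.
Variable G : {fset pt}.

Lemma intQ_numqK x : is_intQ x -> (numq x)%:~R = x.
Proof. by case=> z ->; rewrite numq_int. Qed.

Lemma HG_pre_lap_int H : HG_pre G H -> {in G, forall v, is_intQ (lap G H v)}.
Proof.
case=> harm bd_int v vG; have [/bd_int //|not_bd] := boolP (boundary G v).
by exists 0; rewrite harm // /interior vG not_bd.
Qed.

Lemma HG_pre_represented H : HG_pre G H -> exists f, represents G f H.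
Proof.
move=> HG; exists (fun v => - numq (lap G H v)) => v vG.
by rewrite mulrNz (intQ_numqK (HG_pre_lap_int HG vG)).
Qed.

Lemma HG_preD H1 H2 :
  HG_pre G H1 -> HG_pre G H2 -> HG_pre G (fun v => H1 v + H2 v).
Proof.
move=> [harm1 bd1] [harm2 bd2]; split=> v vb; rewrite lapD.
  by rewrite harm1 // harm2 // addr0.
have [z1 ->] := bd1 v vb; have [z2 ->] := bd2 v vb.
by exists (z1 + z2); rewrite rmorphD.
Qed.

Lemma representsD f1 f2 H1 H2 :
  represents G f1 H1 -> represents G f2 H2 ->
  represents G (fun v => f1 v + f2 v) (fun v => H1 v + H2 v).
Proof. by move=> r1 r2 v vG; rewrite lapD rmorphD /= r1 // r2 // -opprD. Qed.

Lemma sand_eq_represents f1 f2 H1 H2 :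
  represents G f1 H1 -> represents G f2 H2 ->
  sand_eq G f1 f2 <-> int_valued G (fun v => H1 v - H2 v).
Proof.
move=> r1 r2; split=> [[h hh] v vG|H12_int].
  pose F w := H1 w - H2 w + (h w)%:~R.
  have F0 : {in G, forall w, F w = 0}.
    apply: lap_eq0_eq0 => w wG.
    by rewrite lapD lapB lap_intr -hh // rmorphB /= r1 // r2 // opprK; lra.
  by exists (- h v); rewrite mulrNz -[LHS]subr0 -(F0 v vG) /F; lra.
exists (fun w => numq (H2 w - H1 w)) => v vG; apply: (@intr_inj rat).
rewrite -lap_intr (@eq_lap _ _ _ (fun w => H2 w - H1 w)) // => [|w wG].
  by rewrite rmorphB /= r1 // r2 // lapB; lra.
by rewrite intQ_numqK // -opprB; case: (H12_int w wG) => z ->; exists (- z); rewrite mulrNz.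
Qed.

Lemma HG_pre_onto g :
  exists H f, HG_pre G H /\ represents G f H /\ sand_eq G f g.
Proof.
have [h h_clears] := clear_interior G g.
pose f v := g v + lap G h v.
have [H lapH] := dirichlet_solvable G (fun v => - (f v)%:~R : rat).
exists H, f; split; [split|split].
- by move=> v vi; have /andP[vG _] := vi; rewrite lapH // /f h_clears // oppr0.
- by move=> v /andP[vG _]; exists (- f v); rewrite lapH // mulrNz.
- by move=> v vG; rewrite lapH // opprK.
- by exists h => v vG; rewrite /f addrAC subrr add0r.
Qed.

End HarmonicModel.

Theorem lemma1 (G : {fset pt}) (hG : convex_domain G) :
  (* well-defined into Z^Γ: -Δ_Γ H is integer valued on Γ *)
  (forall H, HG_pre G H -> exists f : pt -> int, represents G f H) /\
  (* additive (group homomorphism) *)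
  (forall H1 H2 f1 f2, HG_pre G H1 -> HG_pre G H2 ->
     represents G f1 H1 -> represents G f2 H2 ->
     HG_pre G (fun v => H1 v + H2 v) /\
     represents G (fun v => f1 v + f2 v) (fun v => H1 v + H2 v)) /\
  (* well-defined on the quotient by H_Z^Γ and injective:
     [-Δ H1] = [-Δ H2] in G_Γ  iff  H1 - H2 ∈ H_Z^Γ *)
  (forall H1 H2 f1 f2, HG_pre G H1 -> HG_pre G H2 ->
     represents G f1 H1 -> represents G f2 H2 ->
     (sand_eq G f1 f2 <-> int_valued G (fun v => H1 v - H2 v))) /\
  (* surjective onto G_Γ *)
  (forall g : pt -> int, exists H f,
     HG_pre G H /\ represents G f H /\ sand_eq G f g).
Proof.
split; first exact: HG_pre_represented.
split; first by move=> H1 H2 f1 f2 HG1 HG2 r1 r2; split; [exact: HG_preD | exact: representsD].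
split; first by move=> H1 H2 f1 f2 _ _; exact: sand_eq_represents.
exact: HG_pre_onto.
Qed.
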